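(* Let $\Gamma$ be a coloring and $\Omega$ a $k$-ordering of $T_{d,k}$, with root $\mathcal T$. (1) For every $g\in G_{d,k}$, the unique reduced word representing $g$ has length $m$ if and only if $\mathrm{dist}(g.\mathcal T,\mathcal T)=m$, where $\mathrm{dist}$ is the graph distance in the line graph of $T_{d,k}$. (2) The left action of $G_{d,k}$ on the $d$-cells of $T_{d,k}$ is simply transitive.
   Context: Fix $d,k\ge1$, $[\![d]\!]=\{0,\dots,d\}$. $G_{d,k}=\langle\alpha_0,\dots,\alpha_d\mid\alpha_i^k=e\rangle$ is the free product of $d+1$ cyclic groups of order $k$; a word $\alpha_{j_m}^{l_m}\cdots\alpha_{j_1}^{l_1}$ is reduced if all $l_r\in\{1,\dots,k-1\}$ and $j_r\ne j_{r+1}$; each element has a unique reduced word, of length $m$. The arboreal complex $T_{d,k}$: start from a single $d$-simplex $\mathcal T$, attach to each of its $(d-1)$-faces $k-1$ new $d$-simplices each using a new vertex, and inductively attach to each $(d-1)$-face created in the previous step $k-1$ new $d$-simplices each using a new vertex; $T_{d,k}$ is the union. Every $(d-1)$-cell lies in exactly $k$ $d$-cells. The line graph of $T_{d,k}$ has the $d$-cells as vertices, two being adjacent iff they share a $(d-1)$-cell. A coloring $\Gamma$ is a map from vertices to $[\![d]\!]$ injective on each $d$-cell, extended to cells by $\Gamma(\sigma)=\{\Gamma(v):v\in\sigma\}$. A $k$-ordering $\Omega$ assigns to each $(d-1)$-cell $\sigma$ a homomorphism $\Omega_\sigma:\mathbb Z/k\mathbb Z\to\mathrm{Sym}(\delta(\sigma))$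 with transitive image, $\delta(\sigma)$ being the set of $d$-cells containing $\sigma$. The left action of $G_{d,k}$ on $d$-cells: for a $d$-cell $\tau$, $i\in[\![d]\!]$, $l\in\mathbb Z$, put $\alpha_i^l.\tau=\Omega_\sigma(l).\tau$ where $\sigma$ is the unique $(d-1)$-face of $\tau$ of color $[\![d]\!]\setminus\{i\}$, and extend to words letter by letter (right-most letter first); this is a well-defined action. *)

From mathcomp Require Import all_boot.
Set Implicit Arguments. Unset Strict Implicit. Unset Printing Implicit Defensive.

(* A step (i, c) means: attach, to the (d-1)-face of the current simplex
   opposite to its vertex in position i, the c-th of the k-1 new simplices;
   the new simplex has the same vertices in the positions <> i and a new
   vertex in position i.  The faces "created" by a simplex are those
   containing its new vertex, i.e. opposite to a position j <> i; hence
   consecutive steps use different positions.  A d-cell is the list of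
   steps from the root (most recent step first). *)

Definition step d k := ('I_d.+1 * 'I_k.-1)%type.

Definition valid_addr d k (s : seq (step d k)) : bool :=
  sorted (fun a b : step d k => a.1 != b.1) s.

Definition cell d k := {s : seq (step d k) | valid_addr s}.

Definition root_cell d k : cell d k := exist _ [::] isT.

(* vertices: the d+1 root vertices, and for each non-root cell the new
   vertex it introduced (labelled by that cell's address) *)
Definition vtx d k := ('I_d.+1 + seq (step d k))%type.

Fixpoint addr_vtx d k (s : seq (step d k)) (p : 'I_d.+1) : vtx d k :=
  match s with
  | [::] => inl p
  | st :: rest => if st.1 == p then inr s else addr_vtx rest p
  end.

Definition cellv d k (t : cell d k) (p : 'I_d.+1) : vtx d k := addr_vtx (val t) p.

Definition in_cell d k (t : cell d k) (v : vtx d k) : bool :=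
  [exists p, cellv t p == v].

(* (d-1)-cells are represented by their vertex set (a predicate on vertices);
   they are the vertex sets of a d-cell with one vertex removed. *)
Definition is_dface d k (sigma : vtx d k -> bool) : Prop :=
  exists (t : cell d k) (p : 'I_d.+1),
    forall v, sigma v = in_cell t v && (v != cellv t p).

Definition delta d k (sigma : vtx d k -> bool) (t : cell d k) : Prop :=
  forall v, sigma v -> in_cell t v.

Definition adj d k (t t' : cell d k) : Prop :=
  t <> t' /\ exists sigma, is_dface sigma /\ delta sigma t /\ delta sigma t'.

Fixpoint walk d k (n : nat) (a b : cell d k) : Prop :=
  match n with
  | 0 => a = b
  | n.+1 => exists c, adj a c /\ walk n c b
  end.

Definition dist_is d k (a b : cell d k) (m : nat) : Prop :=
  walk m a b /\ forall n, n < m -> ~ walk n a b.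

Definition is_coloring d k (Gam : vtx d k -> 'I_d.+1) : Prop :=
  forall t : cell d k, injective (fun p => Gam (cellv t p)).

(* k-orderings: Om sigma l is Omega_sigma(l mod k); the conditions say that
   l |-> Om sigma l restricted to delta(sigma) is a homomorphism
   Z/kZ -> Sym(delta sigma) with transitive image. *)
Definition is_kordering d k
    (Om : (vtx d k -> bool) -> nat -> cell d k -> cell d k) : Prop :=
  forall sigma, is_dface sigma ->
    [/\ (forall t l, delta sigma t -> delta sigma (Om sigma l t)),
        (forall t, delta sigma t -> Om sigma 0 t = t),
        (forall t l1 l2, delta sigma t ->
            Om sigma (l1 + l2) t = Om sigma l1 (Om sigma l2 t)),
        (forall t, delta sigma t -> Om sigma k t = t) &
        (forall t t', delta sigma t -> delta sigma t' ->
            exists l, Om sigma l t = t')].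

(* the action of alpha_i^l: use the face of tau of color [d] \ {i} *)
Definition act1 d k (Gam : vtx d k -> 'I_d.+1)
    (Om : (vtx d k -> bool) -> nat -> cell d k -> cell d k)
    (i : 'I_d.+1) (l : nat) (t : cell d k) : cell d k :=
  Om (fun v => in_cell t v && (Gam v != i)) l t.

(* words alpha_{j_m}^{l_m} ... alpha_{j_1}^{l_1} as the list
   [:: (j_m,l_m); ...; (j_1,l_1)]; right-most letter acts first *)
Definition word d := seq ('I_d.+1 * nat).

Definition act d k Gam Om (w : word d) (t : cell d k) : cell d k :=
  foldr (fun x t => @act1 d k Gam Om x.1 x.2 t) t w.

(* reduced words = normal forms of the elements of G_{d,k} *)
Definition reduced d k (w : word d) : bool :=
  all (fun x => (0 < x.2) && (x.2 < k)) w &&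
  sorted (fun a b : 'I_d.+1 * nat => a.1 != b.1) w.

(* The cells containing a given (d-1)-face form a block of k pairwise adjacent
   cells, and blocks are glued along cells into a tree.  A coloring fixes the
   color of every vertex by its position in the address, so [alpha_i^l] moves a
   cell inside its block at the position of color [i], and the k-ordering makes
   these moves run through the whole block.
   Fix a base cell T.  Every other cell has exactly one block through which a
   geodesic to T leaves it, and is one step further from T than the gate of that
   block (its cell nearest to T).  Consecutive letters of a reduced word act in
   different blocks, so each letter moves one step away from T: w.T is at tree
   distance |w| from T and leaves towards T through the block of the outermost
   letter.  Walking back along gates writes every cell as w.T, and peeling off
   outermost letters shows w is unique.  For T the root, tree distance is
   address length, and addresses of adjacent cells differ in length by at most
   one, so no shorter walk reaches the root. *)

From mathcomp Require Import all_boot.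
Set Implicit Arguments. Unset Strict Implicit. Unset Printing Implicit Defensive.

Lemma suffix_size_inj (T : eqType) (s1 s2 t : seq T) :
  suffix s1 t -> suffix s2 t -> size s1 = size s2 -> s1 = s2.
Proof. by rewrite !suffixE => /eqP E1 /eqP E2 Es; rewrite -E1 -E2 Es. Qed.

Section Addresses.

Variables d k : nat.
Local Notation addr := (seq (step d k)).

(* For [extensible p b], the k cells containing the face of [b] opposite
   position [p]. *)
Definition block (b : addr) (p : 'I_d.+1) : seq addr :=
  b :: [seq (p, c) :: b | c <- enum 'I_k.-1].

Variant block_spec b p : addr -> Prop :=
  | BlockBase : block_spec b p b
  | BlockChild c : block_spec b p ((p, c) :: b).

Lemma blockP b p v : v \in block b p -> block_spec b p v.
Proof. by rewrite in_cons => /predU1P [-> | /mapP [c _ ->]]; constructor. Qed.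

Lemma block_child b p c : (p, c) :: b \in block b p.
Proof. by rewrite in_cons (map_f (fun c => (p, c) :: b)) ?mem_enum ?orbT. Qed.

Lemma block_uniq b p : uniq (block b p).
Proof.
rewrite /= map_inj_uniq ?enum_uniq ?andbT; last by move=> c1 c2 [].
by apply/mapP => -[c _] /(congr1 size) /= /n_Sn.
Qed.

Lemma size_block b p : 0 < k -> size (block b p) = k.
Proof. by move=> k_gt0; rewrite /= size_map size_enum_ord prednK. Qed.

Definition base (p : 'I_d.+1) (u : addr) : addr :=
  if u is x :: u' then if x.1 == p then u' else u else u.

Definition extensible (p : 'I_d.+1) (b : addr) : bool :=
  if b is y :: _ then y.1 != p else true.

Lemma valid_extensible x u : valid_addr (x :: u) -> extensible x.1 u.
Proof. by case: u => [|y u] // /andP [Hxy _]; rewrite /= eq_sym. Qed.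

Lemma base_child p c b : base p ((p, c) :: b) = b.
Proof. by rewrite /= eqxx. Qed.

Lemma base_id p u : extensible p u -> base p u = u.
Proof. by case: u => [|x u] //= /negbTE ->. Qed.

Lemma mem_block_base p u : u \in block (base p u) p.
Proof.
case: u => [|[q c] u] /=; first exact: mem_head.
by case: eqP => [-> | _]; rewrite ?block_child ?mem_head.
Qed.

Lemma valid_base p u : valid_addr u -> valid_addr (base p u) && extensible p (base p u).
Proof.
case: u => [|x u] //= Vu; case: ifP => [/eqP <- | Hx]; last by rewrite /= Hx Vu.
by case: u Vu => [|y u] //= /andP [Hxy ->]; rewrite eq_sym.
Qed.

Lemma base_block p b v : extensible p b -> v \in block b p -> base p v = b.
Proof. by move=> Hb /blockP [|c]; [apply: base_id | apply: base_child]. Qed.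

Lemma valid_block p b v :
  valid_addr b -> extensible p b -> v \in block b p -> valid_addr v.
Proof.
move=> Vb Hb /blockP [|c] //.
by case: b Vb Hb => [|y b] //= -> Hy; rewrite eq_sym Hy.
Qed.

Lemma addr_vtx_block b p v q : v \in block b p -> q != p -> addr_vtx v q = addr_vtx b q.
Proof. by case/blockP => [|c] //= Hq; rewrite eq_sym (negbTE Hq). Qed.

Lemma addr_vtx_size (s r : addr) q : addr_vtx s q = inr r -> size r <= size s.
Proof.
elim: s => [|x s IH] //=; case: ifP => _ => [[<-] // | /IH].
by move=> H; apply: leq_trans H _.
Qed.

Lemma addr_vtx_recent x y (s : addr) p : x.1 != y.1 ->
  exists2 q, q != p & exists2 r, addr_vtx [:: x, y & s] q = inr r & size s < size r.
Proof.
move=> Hxy; case: (eqVneq x.1 p) => [Hx | Hx].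
  exists y.1; first by rewrite -Hx eq_sym.
  by exists (y :: s); rewrite //= (negbTE Hxy) eqxx.
by exists x.1 => //; exists [:: x, y & s]; rewrite //= eqxx.
Qed.

Definition through (t b : addr) (p : 'I_d.+1) : bool :=
  [exists c, suffix ((p, c) :: b) t].

Lemma through_child t b p c : suffix ((p, c) :: b) t -> through t b p.
Proof. by move=> Hc; apply/existsP; exists c. Qed.

(* The cell of [block b p] nearest to [t]. *)
Definition gate (t b : addr) (p : 'I_d.+1) : addr :=
  if [pick c | suffix ((p, c) :: b) t] is Some c then (p, c) :: b else b.

Variant gate_spec t b p : addr -> bool -> Prop :=
  | GateChild c of suffix ((p, c) :: b) t : gate_spec t b p ((p, c) :: b) true
  | GateBase of ~~ through t b p : gate_spec t b p b false.

Lemma gateP t b p : gate_spec t b p (gate t b p) (through t b p).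
Proof.
rewrite /gate; case: pickP => [c Hc | Hn]; first by rewrite (through_child Hc); constructor.
have Hf : ~~ through t b p by apply/existsP => -[c]; rewrite Hn.
by rewrite (negbTE Hf); constructor.
Qed.

Lemma gate_child t b p c : suffix ((p, c) :: b) t -> gate t b p = (p, c) :: b.
Proof.
move=> Hc; case: gateP => [c' Hc' | /existsP []]; last by exists c.
exact: suffix_size_inj Hc' Hc _.
Qed.

Lemma gate_in_block t b p : gate t b p \in block b p.
Proof. by case: gateP => [c _ | _]; rewrite ?block_child ?mem_head. Qed.

(* Unless [u] lies on the way from the root to
   [t], its parent [u'] is equally far from [t] when [t] lies below a sibling of
   [u] (siblings are adjacent), and one step closer otherwise. *)
Fixpoint tree_dist (t u : addr) : nat :=
  match u with
  | [::] => size t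
  | x :: u' => if suffix u t then size t - size u
               else if through t u' x.1 then tree_dist t u' else (tree_dist t u').+1
  end.

Lemma tree_dist_suffix t u : suffix u t -> tree_dist t u = size t - size u.
Proof. by case: u => [|x u] /= Hs; rewrite ?subn0 ?Hs. Qed.

Lemma tree_dist_refl t : tree_dist t t = 0.
Proof. by rewrite tree_dist_suffix ?suffix_refl ?subnn. Qed.

Lemma tree_dist_nil u : tree_dist [::] u = size u.
Proof.
elim: u => [|x u IH] //=; rewrite suffixs0 IH /through.
by case: existsP => // -[c]; rewrite suffixs0.
Qed.

Lemma tree_dist_block t b p v : v \in block b p -> v != gate t b p ->
  tree_dist t v = (tree_dist t (gate t b p)).+1.
Proof.
case: gateP => [c Hc | Hn]; case/blockP => [| c'] Hne; rewrite ?eqxx //= in Hne *.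
- have Hb : suffix b t := catl_suffix (s := [:: _]) Hc.
  by rewrite Hc (tree_dist_suffix Hb) subnSK ?(size_suffix Hc).
- have Hb : suffix b t := catl_suffix (s := [:: _]) Hc.
  have -> : suffix ((p, c') :: b) t = false.
    by apply: contraNF Hne => /suffix_size_inj /(_ Hc) ->.
  by rewrite Hc (through_child Hc) (tree_dist_suffix Hb) subnSK ?(size_suffix Hc).
- have -> : suffix ((p, c') :: b) t = false by apply: contraNF Hn; apply: through_child.
  by rewrite (negbTE Hn).
Qed.

(* A geodesic from [u] to [t] leaves [u] through its face opposite position [p]. *)
Definition toward (t u : addr) (p : 'I_d.+1) : bool := u != gate t (base p u) p.

Lemma tree_dist_toward t u p : toward t u p ->
  tree_dist t u = (tree_dist t (gate t (base p u) p)).+1.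
Proof. exact: tree_dist_block (mem_block_base p u). Qed.

Lemma gate_not_toward t b p : extensible p b -> ~~ toward t (gate t b p) p.
Proof. by move=> Hb; rewrite /toward (base_block Hb (gate_in_block t b p)) eqxx. Qed.

Lemma not_toward_suffix t q c u : suffix ((q, c) :: u) t -> ~~ toward t ((q, c) :: u) q.
Proof. by move=> Hs; rewrite /toward base_child (gate_child Hs) eqxx. Qed.

Lemma toward_child t u p : toward t u p -> extensible p u ->
  exists c, suffix ((p, c) :: u) t.
Proof.
move=> + Hu; rewrite /toward (base_id Hu).
by case: gateP => [c Hc _ | _]; [exists c | rewrite eqxx].
Qed.

Lemma toward_exists t u : valid_addr t -> u != t -> exists p, toward t u p.
Proof.
move=> Vt Hne; case Hs: (suffix u t).
- case/suffixP: Hs => r Et; case/lastP: r Et => [|r [q c]] Et.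
    by rewrite Et eqxx in Hne.
  rewrite cat_rcons in Et.
  have Vqu : valid_addr ((q, c) :: u).
    by apply: (suffix_sorted _ Vt); rewrite Et suffix_suffix.
  have Hu : extensible q u := valid_extensible Vqu.
  exists q; rewrite /toward (base_id Hu) (gate_child (c := c)).
    by apply/eqP => /(congr1 size) /= /n_Sn.
  by rewrite Et suffix_suffix.
- case: u Hs {Hne} => [|[q c] u] Hs; first by rewrite suffix0s in Hs.
  exists q; rewrite /toward base_child; case: gateP => [c' Hc' | _].
    by apply: contraFneq Hs => ->.
  by apply/eqP => /(congr1 size) /= /esym /n_Sn.
Qed.

Lemma toward_uniq t u p q : toward t u p -> toward t u q -> p = q.
Proof.
have key p' q' : toward t u p' -> toward t u q' -> extensible q' u -> p' = q'.
  move=> Hp Hq Hu; have [c Hc] := toward_child Hq Hu.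
  case Hup: (extensible p' u).
    have [c' Hc'] := toward_child Hp Hup.
    by case: (suffix_size_inj Hc' Hc erefl).
  case: u Hp Hc Hup {Hq Hu} => [|[r c'] u] // Hp Hc /negbFE /eqP /= Er; subst r.
  by rewrite (negbTE (not_toward_suffix (catl_suffix (s := [:: _]) Hc))) in Hp.
move=> Hp Hq; case Hu: (extensible q u); first exact: key Hp Hq Hu.
case Hu': (extensible p u); first by apply/esym/(key _ _ Hq Hp).
by case: u Hu Hu' {Hp Hq key} => [|y u] //= /negbFE /eqP <- /negbFE /eqP ->.
Qed.

Lemma not_toward_gate t u v p : valid_addr u -> ~~ toward t u p ->
  v \in block (base p u) p -> gate t (base p v) p = u.
Proof.
move=> Vu; rewrite negbK eq_sym => /eqP Eu Hv.
by case/andP: (valid_base p Vu) => _ /base_block -> //.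
Qed.

Lemma leave_gate t u v p : valid_addr u -> ~~ toward t u p ->
  v \in block (base p u) p -> v != u ->
  toward t v p /\ tree_dist t v = (tree_dist t u).+1.
Proof.
move=> Vu Hu Hv Hne; have Eg := not_toward_gate Vu Hu Hv.
have Ht : toward t v p by rewrite /toward Eg.
by split=> //; rewrite (tree_dist_toward Ht) Eg.
Qed.

Lemma not_toward_self t p : ~~ toward t t p.
Proof. by apply/negP => /tree_dist_toward; rewrite tree_dist_refl. Qed.

Lemma tree_dist_gt0 t u : valid_addr t -> u != t -> 0 < tree_dist t u.
Proof. by move=> Vt /(toward_exists Vt) [p /tree_dist_toward ->]. Qed.

End Addresses.

Section Coloring.

Variables (d k : nat) (Gam : vtx d k -> 'I_d.+1).
Hypothesis HG : is_coloring Gam.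

Definition pos_color (q : 'I_d.+1) : 'I_d.+1 := Gam (inl q).

Lemma pos_color_inj : injective pos_color.
Proof. exact: @HG (root_cell d k). Qed.

Lemma color_addr_vtx s q : valid_addr s -> Gam (addr_vtx s q) = pos_color q.
Proof.
elim: s q => [|x s IH] q //= Vs; have Vs' := path_sorted Vs.
case: eqP => [<- | _]; last exact: IH.
have /codomP [r Er] := inj_card_onto pos_color_inj (leqnn _) (Gam (inr (x :: s))).
suff Erx : r = x.1 by rewrite Er Erx.
apply: (@HG (exist _ (x :: s) Vs) r x.1); rewrite /= /cellv /= eqxx.
by case: eqP => [// | _]; rewrite IH ?Er.
Qed.

Lemma cellv_inj (t : cell d k) : injective (cellv t).
Proof. by move=> x y E; apply: (@HG t); rewrite /= E. Qed.

Lemma cellv_shared (a t : cell d k) q : in_cell a (cellv t q) -> cellv a q = cellv t q.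
Proof.
case/existsP => r /eqP Er; suff Erq : r = q by subst r.
apply: pos_color_inj; rewrite -(color_addr_vtx _ (valP a)) -(color_addr_vtx _ (valP t)).
by move: Er; rewrite /cellv => ->.
Qed.

Lemma adj_cellv (a b : cell d k) : adj a b ->
  exists p, forall q, q != p -> cellv a q = cellv b q.
Proof.
case=> _ [s [[t [p Hs]] [Ha Hb]]]; exists p => q Hq.
have Hst : s (cellv t q).
  rewrite Hs (inj_eq (@cellv_inj t)) Hq andbT.
  by apply/existsP; exists q.
by rewrite (cellv_shared (Ha _ Hst)) (cellv_shared (Hb _ Hst)).
Qed.

Lemma adj_size (a b : cell d k) : adj a b -> size (val a) <= (size (val b)).+1.
Proof.
case/adj_cellv => p Hab; rewrite leqNgt; apply/negP.
case: a Hab => [[|x [|y a]] Va] //= Hab; rewrite !ltnS => Hlt.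
have Hxy : x.1 != y.1 by rewrite eq_sym; apply: valid_extensible Va.
have [q Hq [r Er Hr]] := addr_vtx_recent a p Hxy.
have : addr_vtx [:: x, y & a] q = cellv b q := Hab q Hq.
rewrite Er => /esym /addr_vtx_size Hrb.
by have := leq_ltn_trans Hlt (leq_trans Hr Hrb); rewrite ltnn.
Qed.

Lemma walk_root_size n (a : cell d k) : walk n a (root_cell d k) -> size (val a) <= n.
Proof.
elim: n a => [|n IH] a /=; first by move=> ->.
by case=> c [/adj_size Hac /IH Hc]; apply: leq_trans Hac _.
Qed.

End Coloring.

Lemma adj_sym d k (a b : cell d k) : adj a b -> adj b a.
Proof. by case=> Hne [s [Hs [Ha Hb]]]; split=> [E | ]; [apply: Hne | exists s]. Qed.

Lemma kordering_mod d k (Om : (vtx d k -> bool) -> nat -> cell d k -> cell d k)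
    sigma U l : is_kordering Om -> is_dface sigma -> delta sigma U ->
  Om sigma l U = Om sigma (l %% k) U.
Proof.
move=> HO Hs HU; have [_ Om0 OmD Omk _] := HO sigma Hs.
have Omk_mul n : Om sigma (n * k) U = U.
  by elim: n => [|n IH]; rewrite ?Om0 // mulSn OmD // IH Omk.
by rewrite {1}(divn_eq l k) addnC OmD // Omk_mul.
Qed.

Section Action.

Variables (d k : nat) (Gam : vtx d k -> 'I_d.+1).
Variable Om : (vtx d k -> bool) -> nat -> cell d k -> cell d k.
Hypotheses (k_gt0 : 0 < k) (HG : is_coloring Gam) (HO : is_kordering Om).

Local Notation pos_color := (pos_color Gam).

Definition face (U : cell d k) (i : 'I_d.+1) (v : vtx d k) : bool :=
  in_cell U v && (Gam v != i).

Definition move (p : 'I_d.+1) (l : nat) (U : cell d k) : cell d k :=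
  act1 Gam Om (pos_color p) l U.

Lemma face_dface U p : is_dface (face U (pos_color p)).
Proof.
exists U, p => v; rewrite /face; case Hv: (in_cell U v) => //=.
case/existsP: Hv => r /eqP <-.
rewrite (inj_eq (@cellv_inj _ _ _ HG U)) /cellv (color_addr_vtx HG _ (valP U)).
by rewrite (inj_eq (pos_color_inj HG)).
Qed.

Lemma face_delta U V p :
  val V \in block (base p (val U)) p -> delta (face U (pos_color p)) V.
Proof.
move=> HV v /andP [/existsP [r /eqP <-] Hr].
have Hrp : r != p.
  by apply: contraNneq Hr => ->; rewrite /cellv (color_addr_vtx HG _ (valP U)).
apply/existsP; exists r; rewrite /cellv.
by rewrite (addr_vtx_block HV Hrp) (addr_vtx_block (mem_block_base p (val U)) Hrp).
Qed.

Lemma face_delta_self U i : delta (face U i) U.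
Proof. by move=> v /andP []. Qed.

Lemma move_mod p l U : move p l U = move p (l %% k) U.
Proof. exact: (kordering_mod l HO (face_dface U p) (@face_delta_self U _)). Qed.

Lemma move0 p U : move p 0 U = U.
Proof. by have [_ Om0 _ _ _] := HO (face_dface U p); apply: Om0; apply: face_delta_self. Qed.

Lemma adj_move p l U : move p l U <> U -> adj U (move p l U).
Proof.
move=> Hne; split=> [E | ]; first by apply: Hne.
have [Hcl _ _ _ _] := HO (face_dface U p).
exists (face U (pos_color p)); split; first exact: face_dface.
by split; [apply: face_delta_self | apply: Hcl; apply: face_delta_self].
Qed.

(* Transitivity puts the whole block in the image of the k moves, and the
   block has exactly k cells. *)
Lemma perm_block_moves p U :
  perm_eq (block (base p (val U)) p) (mkseq (fun l => val (move p l U)) k).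
Proof.
have /andP [Vb Hb] := valid_base p (valP U).
have Hsub : {subset block (base p (val U)) p <= mkseq (fun l => val (move p l U)) k}.
  move=> v Hv; pose V : cell d k := exist _ v (valid_block Vb Hb Hv).
  have [_ _ _ _ Htr] := HO (face_dface U p).
  have [l El] : exists l, move p l U = V.
    exact: Htr U V (@face_delta_self U _) (@face_delta U V p Hv).
  apply/mapP; exists (l %% k); first by rewrite mem_iota add0n ltn_pmod.
  by rewrite -move_mod El.
have Hsize : size (mkseq (fun l => val (move p l U)) k) <= size (block (base p (val U)) p).
  by rewrite size_mkseq size_block.
have [_ Heq] := uniq_min_size (block_uniq _ _) Hsub Hsize.
exact: uniq_perm (block_uniq _ _) (leq_size_uniq (block_uniq _ _) Hsub Hsize) Heq.
Qed.

Lemma move_in_block p l U : val (move p l U) \in block (base p (val U)) p.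
Proof.
rewrite move_mod (perm_mem (perm_block_moves p U)).
by apply: (map_f (fun l => val (move p l U))); rewrite mem_iota add0n ltn_pmod.
Qed.

Lemma move_onto p U V : val V \in block (base p (val U)) p ->
  exists2 l, l < k & move p l U = V.
Proof.
rewrite (perm_mem (perm_block_moves p U)) => /mapP [l].
by rewrite mem_iota add0n => Hl EV; exists l => //; apply: val_inj.
Qed.

Lemma move_inj p U l1 l2 : l1 < k -> l2 < k -> move p l1 U = move p l2 U -> l1 = l2.
Proof.
move=> H1 H2 E; have : uniq (mkseq (fun l => val (move p l U)) k).
  by rewrite -(perm_uniq (perm_block_moves p U)) block_uniq.
by move/mkseq_uniqP; apply; rewrite ?inE //= E.
Qed.

Lemma move_neq p l U : 0 < l < k -> val (move p l U) != val U.
Proof.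
case/andP=> Hl0 Hlk; apply/negP => /eqP /val_inj E.
by have := move_inj Hlk k_gt0 (etrans E (esym (move0 p U))) => El; rewrite El in Hl0.
Qed.

Definition pos_of : 'I_d.+1 -> 'I_d.+1 := invF (pos_color_inj HG).

Lemma pos_of_inj : injective pos_of.
Proof. exact: can_inj (f_invF (pos_color_inj HG)). Qed.

Lemma act_cons x w T : act Gam Om (x :: w) T = move (pos_of x.1) x.2 (act Gam Om w T).
Proof. by rewrite /move /pos_of f_invF. Qed.

Definition lead_pos (w : word d) : option 'I_d.+1 :=
  if w is x :: _ then Some (pos_of x.1) else None.

Lemma reduced_cons x w : reduced k (x :: w) =
  [&& 0 < x.2 < k, reduced k w & lead_pos w != Some (pos_of x.1)].
Proof.
rewrite /reduced /= andbA; case: w => [|y w] /=; first by rewrite !andbT.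
rewrite (inj_eq (@Some_inj _)) (inj_eq pos_of_inj) eq_sym.
by rewrite -!andbA; do !bool_congr.
Qed.

Lemma reduced_act T w : reduced k w ->
  tree_dist (val T) (val (act Gam Om w T)) = size w /\
  forall p, toward (val T) (val (act Gam Om w T)) p = (lead_pos w == Some p).
Proof.
elim: w => [_ | x w IH].
  by split=> [|p]; [exact: tree_dist_refl | exact/negbTE/not_toward_self].
rewrite reduced_cons act_cons => /and3P [Hx Hw Hlead].
have [Dw Tw] := IH Hw; set U := act Gam Om w T; set p := pos_of x.1.
have HU : ~~ toward (val T) (val U) p by rewrite Tw.
have [Tx Dx] := leave_gate (valP U) HU (move_in_block p x.2 U) (move_neq p U Hx).
split=> [|q]; first by rewrite Dx Dw.
rewrite (inj_eq (@Some_inj _)); apply/idP/eqP => [Hq | <- //].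
exact: toward_uniq Tx Hq.
Qed.

Lemma gate_act_cons T x w : reduced k (x :: w) ->
  gate (val T) (base (pos_of x.1) (val (act Gam Om (x :: w) T))) (pos_of x.1) =
  val (act Gam Om w T).
Proof.
rewrite reduced_cons act_cons => /and3P [_ Hw Hlead].
have [_ Tw] := reduced_act T Hw.
by apply: not_toward_gate (valP _) _ (move_in_block _ _ _); rewrite Tw.
Qed.

Lemma walk_act T w : reduced k w -> walk (size w) (act Gam Om w T) T.
Proof.
elim: w => [|x w IH] //; rewrite reduced_cons => /and3P [Hx Hw _].
exists (act Gam Om w T); split; last exact: IH.
by apply: adj_sym; rewrite act_cons; apply: adj_move => /eqP; apply/negP/move_neq.
Qed.

Lemma act_onto T V : exists2 w, reduced k w & act Gam Om w T = V.
Proof.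
have [n HV] : exists n, tree_dist (val T) (val V) <= n.
  by exists (tree_dist (val T) (val V)).
elim: n V HV => [|n IH] V HV; case: (eqVneq V T) => [-> | HVT]; try by exists [::].
  by move: HV; rewrite leqn0 (gtn_eqF (tree_dist_gt0 (valP T) HVT)).
have [p Hp] := toward_exists (valP T) HVT.
have /andP [Vb Hb] := valid_base p (valP V); set b := base p (val V) in Vb Hb Hp.
pose G : cell d k := exist _ (gate (val T) b p) (valid_block Vb Hb (gate_in_block _ _ _)).
have HGn : tree_dist (val T) (val G) <= n by rewrite -ltnS -(tree_dist_toward Hp).
have [w Hw EG] := IH G HGn.
have HbG : base p (val G) = b := base_block Hb (gate_in_block _ _ _).
have [l Hl El] : exists2 l, l < k & move p l G = V.
  by apply: move_onto; rewrite HbG mem_block_base.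
exists ((pos_color p, l) :: w); last by rewrite act_cons /pos_of invF_f EG.
rewrite reduced_cons /= Hl Hw andbT /pos_of invF_f.
apply/andP; split.
  rewrite lt0n; apply/eqP => El0; have EVG : V = G by rewrite -El El0 move0.
  by move: Hp; rewrite /toward -/b EVG eqxx.
have [_ TG] := reduced_act T Hw.
by rewrite -TG EG; apply: gate_not_toward.
Qed.

Lemma act_reduced_inj T w1 w2 : reduced k w1 -> reduced k w2 ->
  act Gam Om w1 T = act Gam Om w2 T -> w1 = w2.
Proof.
elim: w1 w2 => [|x1 w1 IH] [|x2 w2] // R1 R2 E.
- by have := (reduced_act T R2).1; rewrite -E tree_dist_refl.
- by have := (reduced_act T R1).1; rewrite E tree_dist_refl.
have Ep : pos_of x1.1 = pos_of x2.1.
  have [[_ T1] [_ T2]] := (reduced_act T R1, reduced_act T R2).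
  apply: (@toward_uniq _ _ (val T) (val (act Gam Om (x2 :: w2) T))).
    by rewrite -E T1.
  by rewrite T2.
have EU : act Gam Om w1 T = act Gam Om w2 T.
  by apply: val_inj; rewrite -(gate_act_cons T R1) -(gate_act_cons T R2) E Ep.
move: R1 R2; rewrite !reduced_cons.
move=> /and3P [/andP [_ H1] W1 _] /and3P [/andP [_ H2] W2 _].
have Ew := IH _ W1 W2 EU; subst w2.
have El : x1.2 = x2.2.
  apply: (@move_inj (pos_of x1.1) (act Gam Om w1 T)) => //.
  by rewrite -act_cons E act_cons Ep.
by move: Ep El; case: x1 x2 {E EU H1 H2} => [i1 l1] [i2 l2] /= /pos_of_inj -> ->.
Qed.

End Action.

Lemma dist_is_uniq d k (a b : cell d k) m n : dist_is a b m -> dist_is a b n -> m = n.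
Proof.
case=> Wm Hm [Wn Hn]; case: (ltngtP m n) => // Hmn.
  by case: (Hn _ Hmn Wm).
by case: (Hm _ Hmn Wn).
Qed.

Theorem lemma5 (d k : nat) (hd : 1 <= d) (hk : 1 <= k)
  (Gam : vtx d k -> 'I_d.+1)
  (Om : (vtx d k -> bool) -> nat -> cell d k -> cell d k)
  (HG : is_coloring Gam) (HO : is_kordering Om) :
  (forall w : word d, reduced k w ->
     forall m, size w = m <-> dist_is (act Gam Om w (@root_cell d k)) (@root_cell d k) m)
  /\
  (forall t t' : cell d k,
     exists! w : word d, reduced k w /\ act Gam Om w t = t').
Proof.
split=> [w Hw m | t t'].
- set a := act Gam Om w (root_cell d k).
  have Ha : size (val a) = size w.
    by rewrite -(tree_dist_nil (val a)); exact: (reduced_act hk HG HO _ Hw).1.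
  have Hdist : dist_is a (root_cell d k) (size w).
    split=> [|n Hn Wn]; first exact: walk_act.
    by have := walk_root_size HG Wn; rewrite Ha leqNgt Hn.
  by split=> [<- // | /(dist_is_uniq Hdist)].
- have [w Hw Et] := act_onto hk HG HO t t'.
  exists w; split=> // w' [Hw' Et'].
  exact: (act_reduced_inj hk HG HO Hw Hw' (etrans Et (esym Et'))).
Qed.
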